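(* Let $A_1$ and $A_2$ be finite alphabets, each with at least two symbols, and give $A_1^*$ and $A_2^*$ their standard self-similar structures. Then a homeomorphism $f\colon A_1^\omega\to A_2^\omega$ is rational in the self-similar-tree sense if and only if it is computed by a nondegenerate asynchronous transducer with input alphabet $A_1$ and output alphabet $A_2$.
   Context: For a finite alphabet $A$, $A^*$ is the rooted tree of finite words, rooted at the empty word, with an edge from $w$ to $wa$ for each $a\in A$; its boundary is identified with $A^\omega$. Its standard self-similar structure has a single vertex type, and for words $\alpha,\beta$ exactly one morphism $A^*_\alpha\to A^*_\beta$, namely the prefix replacement $\alpha\gamma\mapsto\beta\gamma$; here $A^*_\alpha$ is the subtree of words with prefix $\alpha$. For self-similar trees $T,T'$, a homeomorphism $f\colon\partial T\to\partial T'$ has equivalent restrictions at same-type vertices $v,w$ of $T$ if there exist same-type vertices $x,y$ of $T'$ and morphisms $\varphi\colon T_v\to T_w$, $\psi\colon T'_x\to T'_y$ such that $f(\partial T_v)\subseteq\partial T'_x$, $f(\partial T_w)\subseteq\partial T'_y$ and $f\circ\varphi_*=\psi_*\circ f$ on $\partial T_v$, where $\varphi_*,\psi_*$ are the induced boundary homeomorphisms. $f$ is rational in the self-similar-tree sense if this equivalence relation on the vertices of $T$ has finitely many classes. A transducer with input alphabet $A_1$ and output alphabet $A_2$ has finitely many states, an initial state, a transition function $Q\times A_1\to Q$ and an output function $Q\times A_1\to A_2^*$ (finite, possibly empty, words). It is nondegenerate if the concatenated output on every infinite input is infinite. *)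

From mathcomp Require Import all_boot.
Set Implicit Arguments. Unset Strict Implicit. Unset Printing Implicit Defensive.

(* Infinite words over A (boundary A^omega of the tree A^* ) are maps nat -> A;
   finite words (vertices of A^* ) are seq A.  Equality of infinite words is
   taken pointwise. *)

Fixpoint prep (A : Type) (v : seq A) (g : nat -> A) : nat -> A :=
  match v with
  | [::] => g
  | a :: v' => fun i => match i with 0 => a | i'.+1 => prep v' g i' end
  end.

Definition agree_upto (A : Type) (n : nat) (x y : nat -> A) : Prop :=
  forall i, i < n -> x i = y i.

Definition cont_omega (A B : Type) (f : (nat -> A) -> (nat -> B)) : Prop :=
  forall x n, exists m, forall y, agree_upto m x y -> agree_upto n (f x) (f y).

Definition homeo_omega (A B : Type) (f : (nat -> A) -> (nat -> B)) : Prop :=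
  exists g : (nat -> B) -> (nat -> A),
    cont_omega f /\ cont_omega g /\
    (forall x i, g (f x) i = x i) /\ (forall y i, f (g y) i = y i).

(* Equivalent restrictions at vertices v, w of A1^* (standard self-similar
   structure: the unique morphisms are prefix replacements). *)
Definition equiv_restr (A1 A2 : Type) (f : (nat -> A1) -> (nat -> A2))
    (v w : seq A1) : Prop :=
  exists (x y : seq A2),
    forall gamma : nat -> A1, exists delta : nat -> A2,
      (forall i, f (prep v gamma) i = prep x delta i) /\
      (forall i, f (prep w gamma) i = prep y delta i).

(* Rational in the self-similar-tree sense: the equivalence relation
   equiv_restr f on the vertices of A1^* has finitely many classes, i.e.
   there is a finite list of representatives meeting every class. *)
Definition ss_rational (A1 : eqType) (A2 : Type) (f : (nat -> A1) -> (nat -> A2)) : Prop :=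
  exists reps : seq (seq A1),
    forall v : seq A1, exists2 r, r \in reps & equiv_restr f v r.

Record transducer (A1 A2 : Type) (Q : finType) := Transducer {
  tr_init : Q;
  tr_next : Q -> A1 -> Q;
  tr_out  : Q -> A1 -> seq A2 }.

Fixpoint run_out (A1 A2 : Type) (Q : finType) (T : transducer A1 A2 Q)
    (q : Q) (x : nat -> A1) (n : nat) : seq A2 :=
  match n with
  | 0 => [::]
  | n'.+1 => tr_out T q (x 0) ++ run_out T (tr_next T q (x 0)) (fun i => x i.+1) n'
  end.

Definition nondegenerate (A1 A2 : Type) (Q : finType) (T : transducer A1 A2 Q) : Prop :=
  forall (x : nat -> A1) (N : nat), exists n, N <= size (run_out T (tr_init T) x n).

(* T computes f: the concatenated output on input x is f x
   (every finite output prefix is a prefix of f x; with nondegeneracy this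
   says the infinite concatenated output equals f x). *)
Definition computes (A1 A2 : Type) (Q : finType) (T : transducer A1 A2 Q)
    (f : (nat -> A1) -> (nat -> A2)) : Prop :=
  forall (x : nat -> A1) (n i : nat),
    i < size (run_out T (tr_init T) x n) ->
    nth (f x i) (run_out T (tr_init T) x n) i = f x i.

From mathcomp Require Import all_boot zify.
From Stdlib Require Import Classical ClassicalEpsilon FunctionalExtensionality.
Set Implicit Arguments. Unset Strict Implicit. Unset Printing Implicit Defensive.

(* For a homeomorphism f, the images f(v A1^omega) of the cylinders have a
   longest common prefix p(v), which is finite because f is injective and
   A1 has two letters, and which grows without bound along every infinite
   word by continuity.  If v and w have equivalent restrictions,
   f(v.) = x.d and f(w.) = y.d, so p(v) = x.k and p(w) = y.k for a common
   continuation k; hence the increment of p(v a) over p(v) depends only on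
   the class of v.  The classes, with these increments as outputs, form a
   transducer computing f; it may start from p([]) because p([]) is empty,
   f being onto and A2 having two letters.  Conversely, two vertices leading
   a transducer computing f to the same state have equivalent restrictions,
   with x and y the outputs produced along them. *)

Section InfiniteWords.
Variable A : Type.
Implicit Types (u w : seq A) (g x : nat -> A).

Lemma prep_cat u w g : prep (u ++ w) g = prep u (prep w g).
Proof. by elim: u => //= a u ->. Qed.

Lemma prep_nth u g d i : i < size u -> prep u g i = nth d u i.
Proof. by elim: u i => //= a u IH [|i] //= /IH. Qed.

Lemma prep_addn u g k : prep u g (size u + k) = g k.
Proof. by elim: u => //= a u IH. Qed.

Lemma prep_sub u g i : size u <= i -> prep u g i = g (i - size u).
Proof. by move=> le_ui; rewrite -{1}(subnKC le_ui) prep_addn. Qed.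

Lemma agree_upto_prep u m F F' g g' :
    (forall i, F i = prep u g i) -> (forall i, F' i = prep u g' i) ->
  agree_upto (size u + m) F F' <-> agree_upto m g g'.
Proof.
move=> eq_F eq_F'; split=> eq_gg' i lt_i.
  by move: (eq_gg' (size u + i)); rewrite ltn_add2l eq_F eq_F' !prep_addn; apply.
rewrite eq_F eq_F'; case: (ltnP i (size u)) => le_ui.
  by rewrite !(prep_nth _ (g 0) le_ui).
by rewrite !prep_sub //; apply: eq_gg'; rewrite ltn_subLR.
Qed.

Fixpoint pref x n : seq A :=
  if n is n'.+1 then x 0 :: pref (fun i => x i.+1) n' else [::].

Lemma size_pref x n : size (pref x n) = n.
Proof. by elim: n x => //= n IH x; rewrite IH. Qed.

Lemma prep_pref_lt x n g i : i < n -> prep (pref x n) g i = x i.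
Proof. by elim: n x i => //= n IH x [|i] //= /IH. Qed.

Lemma prep_pref x n : prep (pref x n) (fun i => x (n + i)) = x.
Proof.
apply: functional_extensionality => i.
case: (ltnP i n) => le_ni; first exact: prep_pref_lt.
by rewrite prep_sub size_pref // subnKC.
Qed.

End InfiniteWords.

Section TransducerRuns.
Variables (A1 A2 : Type) (Q : finType) (T : transducer A1 A2 Q).

Fixpoint word_out q (v : seq A1) : seq A2 :=
  if v is a :: v' then tr_out T q a ++ word_out (tr_next T q a) v' else [::].

Fixpoint word_state q (v : seq A1) : Q :=
  if v is a :: v' then word_state (tr_next T q a) v' else q.

Lemma run_out_prep q v g m :
  run_out T q (prep v g) (size v + m) = word_out q v ++ run_out T (word_state q v) g m.
Proof. by elim: v q => //= a v IH q; rewrite IH catA. Qed.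

Lemma size_run_out_addn q x n p :
  size (run_out T q x n) <= size (run_out T q x (n + p)).
Proof. by elim: n q x => //= n IH q x; rewrite !size_cat leq_add2l. Qed.

Variable f : (nat -> A1) -> (nat -> A2).
Hypotheses (T_nondeg : nondegenerate T) (T_f : computes T f).

Let q0 := tr_init T.

Lemma computes_word_out v g d i :
  i < size (word_out q0 v) -> f (prep v g) i = nth d (word_out q0 v) i.
Proof.
have run_v : run_out T q0 (prep v g) (size v) = word_out q0 v.
  by rewrite -[size v]addn0 run_out_prep cats0.
by move=> lt_i; rewrite (set_nth_default (f (prep v g) i)) // -run_v T_f ?run_v.
Qed.

Lemma computes_word_state v w g k :
  word_state q0 v = word_state q0 w ->
  f (prep v g) (size (word_out q0 v) + k) = f (prep w g) (size (word_out q0 w) + k).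
Proof.
move=> eq_vw; set s := word_state q0 v.
have [n le_n] := T_nondeg (prep v g) (size (word_out q0 v) + k).+1.
have lt_k : k < size (run_out T s g n).
  have := leq_trans le_n (size_run_out_addn q0 (prep v g) n (size v)).
  by rewrite [n + _]addnC run_out_prep size_cat ltn_add2l.
have nth_run u d : word_state q0 u = s ->
    f (prep u g) (size (word_out q0 u) + k) = nth d (run_out T s g n) k.
  move=> eq_u; rewrite -(T_f (n := size u + n)) run_out_prep eq_u; last first.
    by rewrite size_cat ltn_add2l.
  by rewrite nth_cat ltnNge leq_addr /= addKn; apply: set_nth_default.
by rewrite (nth_run v (f (prep v g) 0)) // (nth_run w (f (prep v g) 0)) // eq_vw.
Qed.

Lemma word_state_equiv_restr v w :
  word_state q0 v = word_state q0 w -> equiv_restr f v w.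
Proof.
move=> eq_vw; exists (word_out q0 v), (word_out q0 w) => g.
exists (fun k => f (prep v g) (size (word_out q0 v) + k)); split=> i.
  case: (ltnP i (size (word_out q0 v))) => le_i.
    by rewrite (prep_nth _ (f (prep v g) i) le_i); exact: computes_word_out.
  by rewrite prep_sub // subnKC.
case: (ltnP i (size (word_out q0 w))) => le_i.
  by rewrite (prep_nth _ (f (prep w g) i) le_i); exact: computes_word_out.
by rewrite prep_sub // (computes_word_state _ _ eq_vw) subnKC.
Qed.

End TransducerRuns.

Lemma ss_rational_of_classifier (A1 : eqType) (A2 : Type) (Q : finType)
    (f : (nat -> A1) -> (nat -> A2)) (cls : seq A1 -> Q) :
  (forall v w, cls v = cls w -> equiv_restr f v w) -> ss_rational f.
Proof.
move=> cls_equiv; pose rep q := epsilon (inhabits [::]) (fun v => cls v = q).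
exists [seq rep q | q <- enum Q] => v.
exists (rep (cls v)); first by rewrite map_f ?mem_enum.
by apply: cls_equiv; rewrite (epsilon_spec _ (fun u => cls u = cls v)) //; exists v.
Qed.

Lemma transducer_ss_rational (A1 : eqType) (A2 : Type) (Q : finType)
    (T : transducer A1 A2 Q) (f : (nat -> A1) -> (nat -> A2)) :
  nondegenerate T -> computes T f -> ss_rational f.
Proof.
move=> T_nondeg T_f; apply: (@ss_rational_of_classifier _ _ _ _ (word_state T (tr_init T))).
exact: word_state_equiv_restr.
Qed.

Section CommonPrefix.
Variables (A1 A2 : Type) (f : (nat -> A1) -> (nat -> A2)).
Implicit Types (v u w : seq A1) (x y : seq A2).

Definition prefix_fixed v n := forall g g', agree_upto n (f (prep v g)) (f (prep v g')).

Lemma prefix_fixedW v m n : m <= n -> prefix_fixed v n -> prefix_fixed v m.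
Proof. by move=> le_mn fix_n g g' i lt_im; apply: fix_n; apply: leq_trans le_mn. Qed.

Lemma prefix_fixed_cat v u n : prefix_fixed v n -> prefix_fixed (v ++ u) n.
Proof. by move=> fix_n g g'; rewrite !(prep_cat v); apply: fix_n. Qed.

Definition fixed_len v : nat :=
  epsilon (inhabits 0) (fun n => prefix_fixed v n /\ ~ prefix_fixed v n.+1).

Lemma fixed_len_eq v n : prefix_fixed v n -> ~ prefix_fixed v n.+1 -> fixed_len v = n.
Proof.
move=> fix_n nfix_n.
have [|fix_l nfix_l] :=
  epsilon_spec (inhabits 0) (fun k => prefix_fixed v k /\ ~ prefix_fixed v k.+1).
  by exists n.
rewrite -/(fixed_len v) in fix_l nfix_l.
apply/eqP; rewrite eqn_leq; apply/andP; split; rewrite leqNgt; apply/negP => lt.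
  by apply: nfix_n; apply: prefix_fixedW lt fix_l.
by apply: nfix_l; apply: prefix_fixedW lt fix_n.
Qed.

Hypothesis prefix_fixed_bounded : forall v, exists n, ~ prefix_fixed v n.

Lemma fixed_lenP v : prefix_fixed v (fixed_len v) /\ ~ prefix_fixed v (fixed_len v).+1.
Proof.
have [B nfix_B] := prefix_fixed_bounded v.
suff [n [fix_n nfix_n]] : exists n, prefix_fixed v n /\ ~ prefix_fixed v n.+1.
  by rewrite (fixed_len_eq fix_n nfix_n).
elim: B nfix_B => [|B IH nfix_B]; first by case=> g g' i.
by case: (classic (prefix_fixed v B)) => [fix_B | /IH]; first by exists B.
Qed.

Lemma fixed_len_max v n : prefix_fixed v n -> n <= fixed_len v.
Proof.
move=> fix_n; rewrite leqNgt; apply/negP => lt_ln.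
by apply: (fixed_lenP v).2; apply: prefix_fixedW lt_ln fix_n.
Qed.

Lemma fixed_len_cat v u : fixed_len v <= fixed_len (v ++ u).
Proof. by apply/fixed_len_max/prefix_fixed_cat; case: (fixed_lenP v). Qed.

Lemma fixed_len_shift v w x y :
    (forall g, exists d, (forall i, f (prep v g) i = prep x d i) /\
                         (forall i, f (prep w g) i = prep y d i)) ->
  exists k, fixed_len v = size x + k /\ fixed_len w = size y + k.
Proof.
move=> vw.
have fixed_shift m : prefix_fixed v (size x + m) <-> prefix_fixed w (size y + m).
  split=> fix_m g g'; have [d [fv fw]] := vw g; have [d' [fv' fw']] := vw g'.
    by apply/(agree_upto_prep _ fw fw')/(agree_upto_prep _ fv fv'); apply: fix_m.
  by apply/(agree_upto_prep _ fv fv')/(agree_upto_prep _ fw fw'); apply: fix_m.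
have le_x : size x <= fixed_len v.
  apply: fixed_len_max => g g' i lt_i.
  have [d [fv _]] := vw g; have [d' [fv' _]] := vw g'.
  by rewrite fv fv' !(prep_nth _ (d 0) lt_i).
have [fix_l nfix_l] := fixed_lenP v.
exists (fixed_len v - size x); rewrite subnKC //; split=> //.
apply: fixed_len_eq; first by apply/fixed_shift; rewrite subnKC.
by rewrite -addnS => /fixed_shift; rewrite addnS subnKC.
Qed.

(* The tail c is arbitrary: the letters read off lie in the common prefix. *)
Variable c : nat -> A1.

Definition prefix_increment v u : seq A2 :=
  [seq f (prep (v ++ u) c) i | i <- iota (fixed_len v) (fixed_len (v ++ u) - fixed_len v)].

Lemma prefix_increment_nil v : prefix_increment v [::] = [::].
Proof. by rewrite /prefix_increment cats0 subnn. Qed.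

Lemma prefix_increment_cons v a u : prefix_increment v (a :: u) = prefix_increment v [:: a] ++ prefix_increment (rcons v a) u.
Proof.
rewrite /prefix_increment -cat_rcons cats1.
set l0 := fixed_len v; set l1 := fixed_len (rcons v a); set l2 := fixed_len (_ ++ u).
have le01 : l0 <= l1 by rewrite /l0 /l1 -cats1 fixed_len_cat.
have le12 : l1 <= l2 by apply: fixed_len_cat.
have -> : l2 - l0 = (l1 - l0) + (l2 - l1) by lia.
rewrite iotaD map_cat subnKC //; congr cat.
apply/eq_in_map => i; rewrite mem_iota subnKC // => /andP [_ lt_i].
by rewrite prep_cat ((fixed_lenP (rcons v a)).1 (prep u c) c).
Qed.

Lemma prefix_increment_equiv v w u : equiv_restr f v w -> prefix_increment v u = prefix_increment w u.
Proof.
move=> [x [y vw]].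
have vw_u g : exists d, (forall i, f (prep (v ++ u) g) i = prep x d i) /\
                        (forall i, f (prep (w ++ u) g) i = prep y d i).
  by have [d dP] := vw (prep u g); exists d; rewrite (prep_cat v) (prep_cat w).
rewrite /prefix_increment; have [k [-> ->]] := fixed_len_shift vw.
have [k' [-> ->]] := fixed_len_shift vw_u.
rewrite !subnDl !iotaDl -!map_comp; apply: eq_map => j /=.
by have [d [fv fw]] := vw_u c; rewrite fv fw !prep_addn.
Qed.

End CommonPrefix.

Lemma ss_rational_classifier (A1 : eqType) (A2 : Type) (f : (nat -> A1) -> (nat -> A2)) :
  ss_rational f -> exists n (rep : 'I_n -> seq A1) (cls : seq A1 -> 'I_n),
    forall v, equiv_restr f v (rep (cls v)).
Proof.
move=> [reps reps_cover].
have [cls clsP] : exists cls : seq A1 -> 'I_(size reps),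
    forall v, equiv_restr f v (nth [::] reps (cls v)).
  apply: (choice (fun v (i : 'I_(size reps)) => equiv_restr f v (nth [::] reps i))) => v.
  have [r r_in vr] := reps_cover v.
  have lt_r : index r reps < size reps by rewrite index_mem.
  by exists (Ordinal lt_r); rewrite /= nth_index.
by exists (size reps), (nth [::] reps), cls.
Qed.

Section Homeomorphisms.
Variables (A1 A2 : Type) (f : (nat -> A1) -> (nat -> A2)).
Hypothesis f_homeo : homeo_omega f.

Lemma homeo_prefix_fixed_bounded (a0 a1 : A1) :
  a0 <> a1 -> forall v, exists n, ~ prefix_fixed f v n.
Proof.
have [g [_ [_ [gf _]]]] := f_homeo; move=> neq_a v; apply: NNPP => all_fixed.
have same_image i : f (prep v (fun=> a0)) i = f (prep v (fun=> a1)) i.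
  apply: NNPP => neq_i; apply: all_fixed; exists i.+1 => fix_i.
  by apply: neq_i; apply: fix_i.
have := gf (prep v (fun=> a0)) (size v + 0).
by rewrite (functional_extensionality _ _ same_image) gf !prep_addn => /esym.
Qed.

Lemma homeo_fixed_len_nil (b0 b1 : A2) : b0 <> b1 -> fixed_len f [::] = 0.
Proof.
have [g [_ [_ [_ fg]]]] := f_homeo; move=> neq_b.
apply: fixed_len_eq => [h h' i //|fix_1]; apply: neq_b.
by have := fix_1 (g (fun=> b0)) (g (fun=> b1)) 0 isT; rewrite /= !fg.
Qed.

End Homeomorphisms.

Section ClassTransducer.
Variables (A1 A2 : Type) (f : (nat -> A1) -> (nat -> A2)) (Q : finType).
Variables (rep : Q -> seq A1) (cls : seq A1 -> Q) (c : nat -> A1).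
Hypotheses (rep_cls : forall v, equiv_restr f v (rep (cls v)))
  (f_bounded : forall v, exists n, ~ prefix_fixed f v n).
(* Needed because a transducer emits nothing before reading its first letter. *)
Hypothesis fixed_len_nil : fixed_len f [::] = 0.

Definition class_transducer : transducer A1 A2 Q :=
  Transducer (cls [::]) (fun q a => cls (rcons (rep q) a))
    (fun q a => prefix_increment f c (rep q) [:: a]).

Lemma run_out_class q x n :
  run_out class_transducer q x n = prefix_increment f c (rep q) (pref x n).
Proof.
elim: n q x => [|n IH] q x /=; first by rewrite prefix_increment_nil.
rewrite IH [in RHS](prefix_increment_cons f_bounded); congr (_ ++ _).
by apply: esym; apply: prefix_increment_equiv.
Qed.

Lemma run_out_class_init x n :
  run_out class_transducer (cls [::]) x n =
  [seq f (prep (pref x n) c) i | i <- iota 0 (fixed_len f (pref x n))].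
Proof.
rewrite run_out_class -(prefix_increment_equiv f_bounded _ _ (rep_cls [::])).
by rewrite /prefix_increment fixed_len_nil subn0.
Qed.

Lemma class_transducer_computes : computes class_transducer f.
Proof.
move=> x n i; rewrite run_out_class_init size_map size_iota => lt_i.
rewrite (nth_map 0) ?size_iota // nth_iota // add0n.
have [fix_l _] := fixed_lenP f_bounded (pref x n).
by rewrite -{2}(prep_pref x n) (fix_l c (fun k => x (n + k)) i lt_i).
Qed.

Lemma class_transducer_nondegenerate : cont_omega f -> nondegenerate class_transducer.
Proof.
move=> f_cont x N; have [m agree_m] := f_cont x N; exists m.
rewrite run_out_class_init size_map size_iota; apply: fixed_len_max => // g g' i lt_i.
have agree_pref h : agree_upto m x (prep (pref x m) h).
  by move=> j lt_j; rewrite prep_pref_lt.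
by rewrite -(agree_m _ (agree_pref g) i lt_i) (agree_m _ (agree_pref g') i lt_i).
Qed.

End ClassTransducer.

Unset Implicit Arguments.

Theorem mainTheorem10 (A1 A2 : finType) (hA1 : 2 <= #|A1|) (hA2 : 2 <= #|A2|)
    (f : (nat -> A1) -> (nat -> A2)) (hf : homeo_omega f) :
  ss_rational f <->
  exists (Q : finType) (T : transducer A1 A2 Q), nondegenerate T /\ computes T f.
Proof.
split; last by move=> [Q [T [T_nondeg T_f]]]; apply: transducer_ss_rational T_nondeg T_f.
move=> /ss_rational_classifier [n [rep [cls rep_cls]]].
have [a0 [a1 [_ _ /eqP neq_a]]] := card_gt1P hA1.
have [b0 [b1 [_ _ /eqP neq_b]]] := card_gt1P hA2.
have f_bounded := homeo_prefix_fixed_bounded hf neq_a.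
have f_nil := homeo_fixed_len_nil hf neq_b.
have [_ [f_cont _]] := hf.
exists 'I_n, (class_transducer f rep cls (fun=> a0)); split.
  exact: class_transducer_nondegenerate.
exact: class_transducer_computes.
Qed.
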